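(* If $n>1$ and $\gcd(n,30)=1$, then there exists an $n\times n$ panstochastic matrix that is not a convex combination of panmagic permutation matrices.
   Context: Rows and columns of $n\times n$ matrices are indexed by $\Omega_n=\{0,\dots,n-1\}$. The $k$th upward (resp. downward) diagonal consists of positions $(i,j)$ with $i+j\equiv k$ (resp. $i-j\equiv k$) $\pmod n$. A real $n\times n$ matrix is panstochastic if its entries are nonnegative and its entries along every row, column, upward diagonal and downward diagonal sum to $1$. A panmagic permutation matrix is a permutation matrix $P_\pi$ ($(i,j)$ entry $1$ if $i=\pi(j)$, else $0$) that is panstochastic. A convex combination is a linear combination with nonnegative coefficients summing to $1$. *)

From mathcomp Require Import all_boot all_order all_algebra all_fingroup.
From mathcomp Require Import reals.
Set Implicit Arguments. Unset Strict Implicit. Unset Printing Implicit Defensive.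
Import Order.TTheory GRing.Theory Num.Theory.
Local Open Scope ring_scope.

Definition updiag (n : nat) (k i j : 'I_n) : bool := ((i + j) %% n == k)%N.
Definition downdiag (n : nat) (k i j : 'I_n) : bool := ((i + (n - j)) %% n == k)%N.

Definition panstochastic (R : realFieldType) (n : nat) (A : 'M[R]_n) : Prop :=
  [/\ forall i j, 0 <= A i j,
      forall i, \sum_(j < n) A i j = 1,
      forall j, \sum_(i < n) A i j = 1,
      forall k : 'I_n, \sum_(i < n) \sum_(j < n | updiag k i j) A i j = 1
    & forall k : 'I_n, \sum_(i < n) \sum_(j < n | downdiag k i j) A i j = 1].

Definition perm_matrix (R : realFieldType) (n : nat) (s : 'S_n) : 'M[R]_n :=
  \matrix_(i < n, j < n) (if i == s j then 1 else 0).

Definition panmagic_perm (R : realFieldType) (n : nat) (s : 'S_n) : Prop :=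
  panstochastic (perm_matrix R s).

Definition conv_panmagic (R : realFieldType) (n : nat) (A : 'M[R]_n) : Prop :=
  exists c : {ffun 'S_n -> R},
    [/\ forall s, 0 <= c s,
        \sum_s c s = 1,
        forall s, c s != 0 -> panmagic_perm R s
      & A = \sum_s c s *: perm_matrix R s].

From mathcomp Require Import all_boot all_order all_algebra all_fingroup.
From mathcomp Require Import reals.
From mathcomp Require Import ring lra.
Set Implicit Arguments. Unset Strict Implicit. Unset Printing Implicit Defensive.
Import Order.TTheory GRing.Theory Num.Theory.
Local Open Scope ring_scope.

(* The example lives on (Z/p)^2, p coprime to 30.  With F : i = 4j and
   G : j = -2i, every row, column and diagonal meets each of F and G exactly
   once, so (1_F + 1_G) / 2 is panstochastic.  Subtracting half of six points
   of F u G and adding half of six other points with the same row, column and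
   diagonal projections keeps it panstochastic and nonnegative, and creates
   three half-entries at (-4,-1), (-4,2), (-1,2).  These exhaust a row, a
   column and a diagonal, each pair sharing one of them; a permutation matrix
   in a convex decomposition would have to pick exactly one cell of each pair,
   which is impossible around an odd cycle.  All determinants and coordinate
   gaps involved have only the prime factors 2, 3 and 5, hence the
   hypothesis on p. *)

Section HalfIntegralMix.
Variables (T : finType) (R : realFieldType).

Lemma sumr_indicator_card (L P : pred T) :
  \sum_(x | L x) (P x)%:R = #|predI L P|%:R :> R.
Proof.
rewrite -sum1_card natr_sum big_mkcondr /=.
by apply: eq_bigr => x _; case: (P x).
Qed.

Lemma sumr_count_mem (L : pred T) (s : seq T) :
  \sum_(x | L x) (count_mem x s)%:R = (count L s)%:R :> R.
Proof.
elim: s => [|y s IHs] /=; first by rewrite big1.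
under eq_bigr do rewrite natrD.
rewrite big_split /= IHs natrD; congr (_ + _).
rewrite big_mkcond (bigD1 y) //= eqxx big1 ?addr0; first by case: (L y).
by move=> x /negbTE; rewrite eq_sym => ->; case: (L x).
Qed.

Variables (F G : pred T) (r d : seq T).

Definition mix (x : T) : R :=
  ((F x)%:R + (G x)%:R - (count_mem x r)%:R + (count_mem x d)%:R) / 2.

Lemma sum_mix (L : pred T) :
  #|predI L F| = 1%N -> #|predI L G| = 1%N -> count L r = count L d ->
  \sum_(x | L x) mix x = 1.
Proof.
move=> LF LG Lrd.
rewrite -mulr_suml !big_split /= sumrN !sumr_indicator_card !sumr_count_mem LF LG Lrd.
by rewrite subrK; field.
Qed.

Lemma mix_ge0 (x : T) : uniq r -> {subset r <= predU F G} -> 0 <= mix x.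
Proof.
move=> r_uniq rFG; rewrite /mix divr_ge0 ?ler0n // addr_ge0 ?ler0n // subr_ge0.
rewrite count_uniq_mem //; case: (boolP (x \in r)) => [/rFG /orP[] -> | _] /=.
- by rewrite lerDl ler0n.
- by rewrite lerDr ler0n.
- by rewrite addr_ge0 ?ler0n.
Qed.
End HalfIntegralMix.

Section IntegralLines.
Variable Z : finComUnitRingType.

Definition on_line (a b : int) (c : Z) : pred (Z * Z) :=
  fun x => a%:~R * x.1 + b%:~R * x.2 == c.

Definition intr_pt (u : int * int) : Z * Z := (u.1%:~R, u.2%:~R).

Lemma card_on_line_meet (a b d e : int) (c f : Z) :
  ((a * e - b * d)%:~R : Z) \is a GRing.unit ->
  #|predI (on_line a b c) (on_line d e f)| = 1%N.
Proof.
set A : Z := a%:~R; set B : Z := b%:~R; set D : Z := d%:~R; set E : Z := e%:~R.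
rewrite intrB !intrM -/A -/B -/D -/E => det_unit.
set u := A * E - B * D.
pose x0 := ((E * c - B * f) / u, (A * f - D * c) / u).
apply: (@eq_card1 _ x0) => -[i j]; rewrite !inE /on_line /= -/A -/B -/D -/E.
rewrite xpair_eqE; apply/andP/andP => [[/eqP <- /eqP <-]|[/eqP -> /eqP ->]].
  by split; apply/eqP; apply: (canRL (mulrK det_unit)); rewrite /u; ring.
by split; apply/eqP; apply: (mulIr det_unit); rewrite mulrDl !mulrA !divrK //; ring.
Qed.

Lemma pair_sum_on_line (V : nmodType) (M : Z * Z -> V) a b c :
  \sum_(x | on_line a b c x) M x = \sum_i \sum_(j | on_line a b c (i, j)) M (i, j).
Proof. by rewrite pair_big_dep; apply: eq_big => -[]. Qed.

Definition lin_form (a b : int) (u : int * int) : int := a * u.1 + b * u.2.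

Lemma on_line_intr_pt a b c u :
  on_line a b c (intr_pt u) = ((lin_form a b u)%:~R == c).
Proof. by rewrite /on_line /lin_form /= intrD !intrM. Qed.

Lemma count_on_line_intr_pt a b c s :
  count (on_line a b c) (map intr_pt s) =
  count (fun z : int => z%:~R == c) (map (lin_form a b) s).
Proof. by rewrite !count_map; apply: eq_count => u; rewrite /= on_line_intr_pt. Qed.
End IntegralLines.
Arguments intr_pt {Z}.

Section HalfTriangle.
Variable R : realFieldType.

Lemma sum_two_point_support (T : finType) (L : pred T) (f g : T -> R) (u v : T) :
  L u -> L v -> u != v -> (forall t, 0 <= f t) ->
  \sum_(t | L t) f t = 1 -> f u + f v = 1 -> (forall t, f t = 0 -> g t = 0) ->
  \sum_(t | L t) g t = g u + g v.
Proof.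
move=> Lu Lv neq_uv f_ge0 f_sum1 f_uv fg.
pose rest t := [&& L t, t != u & t != v].
have sum_uv (h : T -> R) : \sum_(t | L t) h t = h u + h v + \sum_(t | rest t) h t.
  rewrite (bigD1 u) //= (bigD1 v) /= ?Lv 1?eq_sym // addrA.
  by congr (_ + _); apply: eq_bigl => t; rewrite /rest andbA.
have f_rest0 : \sum_(t | rest t) f t = 0.
  by apply: (addrI 1); rewrite addr0 -{1}f_uv -sum_uv.
rewrite sum_uv big1 ?addr0 // => t rest_t; apply/fg.
exact: (psumr_eq0P (fun t _ => f_ge0 t) f_rest0).
Qed.

Lemma conv_perm_matrix_support (n : nat) (c : {ffun 'S_n -> R}) (s : 'S_n) (i j : 'I_n) :
  (forall s, 0 <= c s) -> c s != 0 ->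
  (\sum_s c s *: perm_matrix R s) i j = 0 -> perm_matrix R s i j = 0.
Proof.
move=> c_ge0 cs_neq0 /eqP; rewrite summxE (bigD1 s) //=.
have cP_ge0 t : 0 <= (c t *: perm_matrix R t) i j.
  by rewrite !mxE mulr_ge0 //; case: ifP.
rewrite paddr_eq0 ?sumr_ge0 // mxE.
by case/andP; rewrite mulf_eq0 (negbTE cs_neq0) => /eqP.
Qed.

Lemma half_triangle_not_conv_panmagic (n : nat) (A : 'M[R]_n) (i1 i2 j1 j2 k : 'I_n) :
  panstochastic A -> i1 != i2 -> j1 != j2 -> downdiag k i1 j1 -> downdiag k i2 j2 ->
  A i1 j1 = 1 / 2 -> A i1 j2 = 1 / 2 -> A i2 j2 = 1 / 2 -> ~ conv_panmagic A.
Proof.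
move=> [A_ge0 A_row A_col _ A_down] ne_i ne_j d1 d2 A11 A12 A22.
move=> [c [c_ge0 c_sum1 c_pan A_conv]].
have [s cs_neq0] : exists s, c s != 0.
  case: (pickP (fun s => c s != 0)) => [s cs|c0]; first by exists s.
  move: c_sum1; rewrite big1 => [/esym/eqP|t _]; first by rewrite oner_eq0.
  exact/eqP/negbFE/c0.
have [_ P_row P_col _ P_down] := c_pan s cs_neq0.
set P := perm_matrix R s in P_row P_col P_down.
have P_supp i j : A i j = 0 -> P i j = 0.
  by rewrite A_conv; apply: conv_perm_matrix_support.
have half2 : 1 / 2 + 1 / 2 = 1 :> R by rewrite -splitr.
have row : P i1 j1 + P i1 j2 = 1.
  rewrite -(P_row i1); symmetry; apply: (sum_two_point_support (f := A i1)) => //.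
    by rewrite A11 A12.
  by move=> t; apply: P_supp.
have col : P i1 j2 + P i2 j2 = 1.
  rewrite -(P_col j2); symmetry; apply: (sum_two_point_support (f := A^~ j2)) => //.
    by rewrite A12 A22.
  by move=> t; apply: P_supp.
have diag : P i1 j1 + P i2 j2 = 1.
  rewrite -(P_down k) pair_big_dep; symmetry.
  apply: (sum_two_point_support (u := (i1, j1)) (v := (i2, j2)) (f := fun x => A x.1 x.2)).
  - exact: d1.
  - exact: d2.
  - by rewrite xpair_eqE negb_and ne_i.
  - by move=> x; apply: A_ge0.
  - by have := A_down k; rewrite pair_big_dep.
  - by rewrite /= A11 A22.
  - by move=> x; apply: P_supp.
move: row col diag; rewrite /P !mxE.
by do 3 case: ifP => _; lra.
Qed.
End HalfTriangle.

Section ModularDiagonals.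
Variable m : nat.
Local Notation p := m.+2.

Lemma updiagE (k i j : 'I_p) : updiag k i j = (i + j == k).
Proof. by rewrite /updiag; apply/eqP/eqP => [h|<-] //; apply: val_inj. Qed.

Lemma downdiagE (k i j : 'I_p) : downdiag k i j = (i - j == k).
Proof.
rewrite /downdiag; apply/eqP/eqP => [h|<-] /=; last by rewrite modnDmr.
by apply: val_inj; rewrite /= modnDmr.
Qed.

Lemma row_sum_on_line (V : nmodType) (M : 'I_p * 'I_p -> V) i :
  \sum_j M (i, j) = \sum_(x | on_line 1 0 i x) M x.
Proof.
rewrite pair_sum_on_line [RHS](bigD1 i) //= [X in _ = _ + X]big1 ?addr0.
  by apply: eq_bigl => j; rewrite /on_line /= mul1r mul0r addr0 eqxx.
move=> i' ne_i'i; apply: big_pred0 => j.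
by rewrite /on_line /= mul1r mul0r addr0 (negbTE ne_i'i).
Qed.

Lemma col_sum_on_line (V : nmodType) (M : 'I_p * 'I_p -> V) j :
  \sum_i M (i, j) = \sum_(x | on_line 0 1 j x) M x.
Proof.
rewrite pair_sum_on_line; apply: eq_bigr => i _.
by rewrite (eq_bigl (pred1 j)) ?big_pred1_eq // => j'; rewrite /on_line /= mul0r mul1r add0r.
Qed.

Lemma updiag_sum_on_line (V : nmodType) (M : 'I_p * 'I_p -> V) k :
  \sum_i \sum_(j | updiag k i j) M (i, j) = \sum_(x | on_line 1 1 k x) M x.
Proof.
rewrite pair_sum_on_line; apply: eq_bigr => i _.
by apply: eq_bigl => j; rewrite updiagE /on_line /= !mul1r.
Qed.

Lemma downdiag_sum_on_line (V : nmodType) (M : 'I_p * 'I_p -> V) k :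
  \sum_i \sum_(j | downdiag k i j) M (i, j) = \sum_(x | on_line 1 (-1) k x) M x.
Proof.
rewrite pair_sum_on_line; apply: eq_bigr => i _.
by apply: eq_bigl => j; rewrite downdiagE /on_line /= mul1r mulN1r.
Qed.

End ModularDiagonals.

Section CoprimeTo30.
Variable m : nat.
Local Notation p := m.+2.
Hypothesis p_coprime30 : coprime p 30.

Lemma coprime720 : coprime p 720.
Proof.
have coprime_dvd30 k : (k %| 30)%N -> coprime p k by move/coprime_dvdr; apply.
by rewrite (_ : 720 = 2 ^ 4 * 3 ^ 2 * 5)%N // !coprimeMr !coprime_dvd30.
Qed.

Lemma intr_Zp_eq0 (z : int) : (z%:~R == 0 :> 'I_p) = (p %| `|z|)%N.
Proof.
have natr_eq0 k : (k%:R == 0 :> 'I_p) = (p %| k)%N.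
  by rewrite Zp_nat /dvdn; apply/eqP/eqP => [/(congr1 val) | h]; last apply: val_inj.
by case: z => k; rewrite ?NegzE ?mulrNz ?oppr_eq0 natr_eq0.
Qed.

Lemma intr_Zp_unit (z : int) : (z %| 720)%Z -> (z%:~R : 'I_p) \is a GRing.unit.
Proof.
move=> z_dvd; have cop : coprime p `|z| by apply: coprime_dvdr z_dvd coprime720.
case: z z_dvd cop => k _ cop; rewrite ?NegzE ?mulrNz ?unitrN;
  by have := @unitZpE p _ isT; rewrite /= => ->.
Qed.

Definition distinguishable (x y : int) := (x == y) || (x - y %| 720)%Z.

Lemma intr_Zp_inj (x y : int) :
  distinguishable x y -> (x%:~R == y%:~R :> 'I_p) = (x == y).
Proof.
case/orP => [/eqP -> | dvd_xy]; first by rewrite !eqxx.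
rewrite -subr_eq0 -intrB intr_Zp_eq0 -subr_eq0.
apply/idP/idP => [p_dvd|/eqP ->]; last by rewrite dvdn0.
by move: (coprime_dvdr dvd_xy coprime720); rewrite /coprime (gcdn_idPl p_dvd).
Qed.

Definition separated (u v : int * int) :=
  [|| distinguishable u.1 v.1 && distinguishable u.2 v.2,
      distinguishable u.1 v.1 && (u.1 != v.1)
    | distinguishable u.2 v.2 && (u.2 != v.2)].

Lemma intr_pt_inj (u v : int * int) :
  separated u v -> (intr_pt u == intr_pt v :> 'I_p * 'I_p) = (u == v).
Proof.
case: u v => [x1 x2] [y1 y2]; rewrite !xpair_eqE /=.
case/or3P => /andP[d1 d2].
- by rewrite !intr_Zp_inj.
- by rewrite (intr_Zp_inj d1) (negbTE d2).
- by rewrite [_ && (_ == _)]andbC [RHS]andbC (intr_Zp_inj d1) (negbTE d2).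
Qed.

Lemma count_mem_intr_pt (u : int * int) s : all (separated u) s ->
  count_mem (intr_pt u : 'I_p * 'I_p) (map intr_pt s) = count_mem u s.
Proof.
move/allP=> sep_s; rewrite count_map; apply: eq_in_count => v /sep_s.
by rewrite /= eq_sym => /intr_pt_inj ->; rewrite eq_sym.
Qed.

Variable R : realFieldType.

Definition pts_minus : seq (int * int) :=
  [:: (-8, -2); (8, 2); (-4, 8); (-2, 4); (2, -4); (4, -8)].
Definition pts_plus : seq (int * int) :=
  [:: (-8, 4); (-4, 2); (-2, -8); (2, 8); (4, -2); (8, -4)].

Definition example_mix : 'I_p * 'I_p -> R :=
  mix R (on_line 1 (-4) 0) (on_line 2 1 0)
    (map intr_pt pts_minus) (map intr_pt pts_plus).

Lemma sum_example_mix_on_line (a b : int) (c : 'I_p) :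
  (a * -4 - b * 1 %| 720)%Z -> (a * 1 - b * 2 %| 720)%Z ->
  perm_eq (map (lin_form a b) pts_minus) (map (lin_form a b) pts_plus) ->
  \sum_(x | on_line a b c x) example_mix x = 1.
Proof.
move=> detF detG /seq.permP balanced; apply: sum_mix.
- by apply: card_on_line_meet; apply: intr_Zp_unit.
- by apply: card_on_line_meet; apply: intr_Zp_unit.
- by rewrite !count_on_line_intr_pt.
Qed.

Lemma example_mix_ge0 x : 0 <= example_mix x.
Proof.
apply: mix_ge0.
  rewrite map_inj_in_uniq // => u v u_in v_in /eqP.
  have sep : all (fun u => all (separated u) pts_minus) pts_minus by vm_compute.
  by move: (allP (allP sep u u_in) v v_in) => /intr_pt_inj -> /eqP.
move=> _ /mapP[u u_in ->]; rewrite inE /= !on_line_intr_pt.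
have on_FG : all (fun u => (lin_form 1 (-4) u == 0) || (lin_form 2 1 u == 0)) pts_minus
  by vm_compute.
by case/orP: (allP on_FG u u_in) => /eqP ->; rewrite eqxx ?orbT.
Qed.

Lemma example_mix_intr_pt_half (u : int * int) :
  [&& distinguishable (lin_form 1 (-4) u) 0, distinguishable (lin_form 2 1 u) 0,
      all (separated u) pts_minus & all (separated u) pts_plus] ->
  ((lin_form 1 (-4) u == 0) + (lin_form 2 1 u == 0) + count_mem u pts_plus
     = 1 + count_mem u pts_minus)%N ->
  example_mix (intr_pt u) = 1 / 2.
Proof.
case/and4P=> dF dG sep_minus sep_plus count_u.
rewrite /example_mix /mix !on_line_intr_pt !count_mem_intr_pt //.
rewrite -[0 : 'I_p]/(0%:~R) !intr_Zp_inj //.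
by rewrite addrAC -!natrD count_u natrD addrK.
Qed.

Definition example_mx : 'M[R]_p := \matrix_(i, j) example_mix (i, j).

Lemma example_mx_panstochastic : panstochastic example_mx.
Proof.
split=> [i j|i|j|k|k]; first by rewrite mxE example_mix_ge0.
- under eq_bigr do rewrite mxE.
  by rewrite row_sum_on_line; apply: sum_example_mix_on_line; vm_compute.
- under eq_bigr do rewrite mxE.
  by rewrite col_sum_on_line; apply: sum_example_mix_on_line; vm_compute.
- under eq_bigr do under eq_bigr do rewrite mxE.
  by rewrite updiag_sum_on_line; apply: sum_example_mix_on_line; vm_compute.
- under eq_bigr do under eq_bigr do rewrite mxE.
  by rewrite downdiag_sum_on_line; apply: sum_example_mix_on_line; vm_compute.
Qed.

Lemma example_mx_not_conv_panmagic : ~ conv_panmagic example_mx.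
Proof.
apply: (@half_triangle_not_conv_panmagic _ _ _ (-4)%:~R (-1)%:~R (-1)%:~R 2%:~R (-3)%:~R).
- exact: example_mx_panstochastic.
- by rewrite intr_Zp_inj.
- by rewrite intr_Zp_inj.
- by rewrite downdiagE -intrB.
- by rewrite downdiagE -intrB.
- by rewrite mxE; apply: (@example_mix_intr_pt_half (-4, -1)); vm_compute.
- by rewrite mxE; apply: (@example_mix_intr_pt_half (-4, 2)); vm_compute.
- by rewrite mxE; apply: (@example_mix_intr_pt_half (-1, 2)); vm_compute.
Qed.

End CoprimeTo30.

Theorem lemma4p1 (R : realType) (n : nat) :
  (1 < n)%N -> coprime n 30 ->
  exists A : 'M[R]_n, panstochastic A /\ ~ conv_panmagic A.
Proof.
case: n => [|[|m]] // _ coprime30.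
exists (example_mx m R); split.
- exact: example_mx_panstochastic.
- exact: example_mx_not_conv_panmagic.
Qed.
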